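(* Let $\mathcal{X}$ be a finite-dimensional Hilbert space with orthonormal basis $\{|j\rangle\}$, let $\xi\in\mathcal{D}(\mathcal{X})$ and let $\Phi$ be the erasure channel $\Phi(A)=\xi\operatorname{Tr}A$ (so $\Phi(\rho)=\xi$ for every density operator $\rho$). Let $U$ be a unitary on $\mathcal{X}$ and $\Psi(\rho)=U\rho U^\dagger$. Then for every $\sigma\in\mathcal{D}(\mathcal{X})$, $$G_{\mathrm{ch}}(\Phi,\Psi;\sigma)=\operatorname{Tr}\big(\sigma^2U^\dagger\xi U\big)\le\sum_i\lambda_i^{\downarrow}\mu_i^{\downarrow},$$ where $\lambda_1^\downarrow\ge\lambda_2^\downarrow\ge\dots$ are the eigenvalues of $\xi$ and $\mu_1^\downarrow\ge\mu_2^\downarrow\ge\dots$ the eigenvalues of $\sigma$.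
   Context: $\mathcal{D}(\mathcal{X})$ is the set of density operators on $\mathcal{X}$. Superfidelity: $G(\rho_1,\rho_2)=\operatorname{Tr}(\rho_1\rho_2)+\sqrt{1-\operatorname{Tr}\rho_1^2}\sqrt{1-\operatorname{Tr}\rho_2^2}$. Channel superfidelity: $G_{\mathrm{ch}}(\Phi,\Psi;\sigma)=\inf G\big((\Phi\otimes\mathbb{1}_{\mathcal{L}(\mathcal{Z})})(\xi'),(\Psi\otimes\mathbb{1}_{\mathcal{L}(\mathcal{Z})})(\xi')\big)$ over all finite-dimensional $\mathcal{Z}$ and all pure states $\xi'$ on $\mathcal{X}\otimes\mathcal{Z}$ with $\operatorname{Tr}_{\mathcal{Z}}\xi'=\sigma$. *)

(* matrices over an arbitrary numClosedFieldType C
   (e.g. the complex numbers); Hilbert space X = C^n with its standard basis. *)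
From HB Require Import structures.
From mathcomp Require Import all_boot all_order all_algebra.
Set Implicit Arguments. Unset Strict Implicit. Unset Printing Implicit Defensive.
Import Order.TTheory GRing.Theory Num.Theory.
Local Open Scope ring_scope.

Section Defs.
Variable C : numClosedFieldType.

Definition dag m n (A : 'M[C]_(m, n)) : 'M[C]_(n, m) := (map_mx Num.conj A)^T.

Definition psd n (A : 'M[C]_n) : Prop :=
  dag A = A /\ forall v : 'cV[C]_n, 0 <= (dag v *m A *m v) 0 0.
Definition density n (A : 'M[C]_n) : Prop := psd A /\ \tr A = 1.
Definition pure n (A : 'M[C]_n) : Prop :=
  density A /\ exists v : 'cV[C]_n, A = v *m dag v.

(* X (x) Z is identified with C^(n*m) via mxvec_index : 'I_n -> 'I_m -> 'I_(n*m) *)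
Definition idx_split n m (k : 'I_(n * m)) : 'I_n * 'I_m :=
  enum_val (cast_ord (esym (mxvec_cast n m)) k).

Definition kron n m (A : 'M[C]_n) (B : 'M[C]_m) : 'M[C]_(n * m) :=
  \matrix_(k, l) (A (idx_split k).1 (idx_split l).1 * B (idx_split k).2 (idx_split l).2).

Definition ptraceZ n m (M : 'M[C]_(n * m)) : 'M[C]_n :=
  \matrix_(i, j) \sum_(k < m) M (mxvec_index i k) (mxvec_index j k).

Definition tensor_id n m (Phi : 'M[C]_n -> 'M[C]_n) (M : 'M[C]_(n * m)) : 'M[C]_(n * m) :=
  \sum_(k < m) \sum_(l < m)
     kron (Phi (\matrix_(i, j) M (mxvec_index i k) (mxvec_index j l))) (delta_mx k l).

Definition superfid n (r1 r2 : 'M[C]_n) : C :=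
  \tr (r1 *m r2) + sqrtC (1 - \tr (r1 *m r1)) * sqrtC (1 - \tr (r2 *m r2)).

Definition Gch_set n (Phi Psi : 'M[C]_n -> 'M[C]_n) (sigma : 'M[C]_n) (g : C) : Prop :=
  exists (m : nat) (xi' : 'M[C]_(n * m)),
    pure xi' /\ ptraceZ xi' = sigma /\
    g = superfid (tensor_id Phi xi') (tensor_id Psi xi').

Definition is_inf (S : C -> Prop) (g : C) : Prop :=
  (forall x, S x -> g <= x) /\ (forall b, (forall x, S x -> b <= x) -> b <= g).

Definition is_Gch n (Phi Psi : 'M[C]_n -> 'M[C]_n) (sigma : 'M[C]_n) (g : C) : Prop :=
  is_inf (Gch_set Phi Psi sigma) g.

Definition eigen_desc n (A : 'M[C]_n) (s : seq C) : Prop :=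
  size s = n /\ char_poly A = \prod_(x <- s) ('X - x%:P) /\ sorted (fun x y => y <= x) s.

End Defs.

(* Every purification of sigma has the form |v> = sum_(i,k) M_(i,k) |i>|k> with
   M M^dagger = sigma.  The unitary channel keeps it pure, so the superfidelity
   collapses to the overlap <v'| xi (x) M^T conj(M) |v'> with v' = (U (x) 1) v,
   which is Tr(M^dagger U^dagger xi U M M^dagger M) = Tr(sigma^2 U^dagger xi U),
   independent of the purification; hence it is the infimum.  Diagonalising
   sigma = P^dagger diag(mu) P and xi = Q^dagger diag(lambda) Q turns this trace
   into sum_(i,j) |R_(i,j)|^2 lambda_i mu_j^2 with R = Q U P^dagger unitary, so
   |R|^2 is doubly stochastic; Abel summation against the sorted eigenvalues
   bounds it by sum_i lambda_i mu_i^2 <= sum_i lambda_i mu_i. *)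

From HB Require Import structures.
From mathcomp Require Import all_boot all_order all_algebra perm ring.
Set Implicit Arguments. Unset Strict Implicit. Unset Printing Implicit Defensive.
Import Order.TTheory GRing.Theory Num.Theory Num.Def.
Local Open Scope ring_scope.

Section Rearrangement.
Variable R : numDomainType.

Lemma telescope_tail n (x : nat -> R) (i : 'I_n) : x n = 0 ->
  x i = \sum_(k < n) (i <= k)%N%:R * (x k - x k.+1).
Proof.
move=> xn; rewrite -(big_mkord xpredT (fun k => (i <= k)%N%:R * (x k - x k.+1))).
rewrite (@big_cat_nat _ _ _ i) //=; last exact: ltnW.
rewrite big_nat_cond big1 ?add0r => [|k /andP[/andP[_ ki] _]]; last first.
  by rewrite leqNgt ki mul0r.
rewrite big_nat_cond (eq_bigr (fun k => - (x k.+1 - x k))) => [|k /andP[/andP[ik _] _]].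
  by rewrite -big_nat_cond sumrN telescope_sumr ?xn ?sub0r ?opprK // ltnW.
by rewrite ik mul1r opprB.
Qed.

Lemma sum_mx1_mulr n (i : 'I_n) (F : 'I_n -> R) : \sum_j (1%:M : 'M[R]_n) i j * F j = F i.
Proof.
rewrite (bigD1 i) //= big1 ?addr0 => [|j /negbTE ji]; rewrite mxE ?eqxx ?mul1r //.
by rewrite eq_sym ji mul0r.
Qed.

Lemma abel_bilinear n (x y : nat -> R) (V : 'M[R]_n) : x n = 0 -> y n = 0 ->
  \sum_i \sum_j V i j * (x i * y j) =
  \sum_(k < n) \sum_(l < n) (x k - x k.+1) * (y l - y l.+1) *
     \sum_(i < n) \sum_(j < n) (i <= k)%N%:R * (j <= l)%N%:R * V i j.
Proof.
move=> xn yn; have ex i := @telescope_tail n x i xn; have ey j := @telescope_tail n y j yn.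
under eq_bigr do under eq_bigr do rewrite ex ey mulr_suml mulr_sumr.
under eq_bigr do under eq_bigr do under eq_bigr do rewrite mulr_sumr mulr_sumr.
under eq_bigr do rewrite exchange_big.
rewrite exchange_big.
under eq_bigr do under eq_bigr do rewrite exchange_big.
under eq_bigr do rewrite exchange_big.
apply: eq_bigr => k _; apply: eq_bigr => l _.
rewrite mulr_sumr; apply: eq_bigr => i _; rewrite mulr_sumr.
by apply: eq_bigr => j _ /=; ring.
Qed.

(* Bounding the corner [0, k] x [0, l] by its rows when k <= l, by its columns otherwise. *)
Lemma substochastic_corner_le n (W : 'M[R]_n) (k l : 'I_n) :
  (forall i j, 0 <= W i j) ->
  (forall i, \sum_j W i j <= 1) -> (forall j, \sum_i W i j <= 1) ->
  \sum_(i < n) \sum_(j < n) (i <= k)%N%:R * (j <= l)%N%:R * W i j <=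
  \sum_(i < n) \sum_(j < n) (i <= k)%N%:R * (j <= l)%N%:R * (1%:M : 'M[R]_n) i j.
Proof.
move=> W0 Wr Wc.
have b_ge0 (b : bool) : 0 <= (b%:R : R) by case: b.
have b_le1 (b : bool) : (b%:R : R) <= 1 by case: b.
under [leRHS]eq_bigr do under eq_bigr do rewrite mulrC.
under [leRHS]eq_bigr do rewrite sum_mx1_mulr.
case: (leqP k l) => [kl|lk].
- apply: (@le_trans _ _ (\sum_(i < n) (i <= k)%N%:R * \sum_j W i j)).
    apply: ler_sum => i _; rewrite mulr_sumr; apply: ler_sum => j _.
    rewrite -mulrA; apply: ler_wpM2l => //.
    by rewrite -[leRHS]mul1r; apply: ler_wpM2r.
  apply: ler_sum => i _; case ik: (i <= k)%N; last by rewrite !mul0r.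
  by rewrite (leq_trans ik kl) !mul1r.
- rewrite exchange_big /=.
  apply: (@le_trans _ _ (\sum_(j < n) (j <= l)%N%:R * \sum_i W i j)).
    apply: ler_sum => j _; rewrite mulr_sumr; apply: ler_sum => i _.
    rewrite mulrAC mulrC; apply: ler_wpM2l => //.
    by rewrite -[leRHS]mul1r; apply: ler_wpM2r.
  apply: ler_sum => j _; case jl: (j <= l)%N; last by rewrite !mulr0 mul0r.
  by rewrite (leq_trans jl (ltnW lk)) !mul1r.
Qed.

Lemma substochastic_rearrangement n (x y : nat -> R) (W : 'M[R]_n) :
  (forall k, (k < n)%N -> x k.+1 <= x k) -> x n = 0 ->
  (forall k, (k < n)%N -> y k.+1 <= y k) -> y n = 0 ->
  (forall i j, 0 <= W i j) ->
  (forall i, \sum_j W i j <= 1) -> (forall j, \sum_i W i j <= 1) ->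
  \sum_i \sum_j W i j * (x i * y j) <= \sum_(i < n) x i * y i.
Proof.
move=> xD xn yD yn W0 Wr Wc.
have -> : \sum_(i < n) x i * y i = \sum_i \sum_j (1%:M : 'M[R]_n) i j * (x i * y j).
  by apply: eq_bigr => i _; rewrite sum_mx1_mulr.
rewrite !abel_bilinear //; apply: ler_sum => k _; apply: ler_sum => l _.
apply: ler_wpM2l; last exact: substochastic_corner_le.
by rewrite mulr_ge0 // subr_ge0; [exact: xD | exact: yD].
Qed.

Lemma sorted_ge0_nth_succ_le (s : seq R) : sorted (fun x y => y <= x) s ->
  (forall i, 0 <= s`_i) -> forall k, s`_k.+1 <= s`_k.
Proof.
move=> s_sorted s_ge0 k; case: (ltnP k.+1 (size s)) => [lt_ks|le_sk].
  by move/sortedP: s_sorted => /(_ 0 k lt_ks).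
by rewrite nth_default.
Qed.

End Rearrangement.

Section Dagger.
Variable C : numClosedFieldType.

Lemma dagE m n (A : 'M[C]_(m, n)) : dag A = (A ^t conjC)%sesqui.
Proof. by rewrite /dag map_trmx. Qed.

Lemma dag_mxE m n (A : 'M[C]_(m, n)) i j : dag A i j = (A j i)^*.
Proof. by rewrite !mxE. Qed.

Lemma dagK m n (A : 'M[C]_(m, n)) : dag (dag A) = A.
Proof. by apply/matrixP => i j; rewrite !dag_mxE conjCK. Qed.

Lemma dagM m n p (A : 'M[C]_(m, n)) (B : 'M[C]_(n, p)) :
  dag (A *m B) = dag B *m dag A.
Proof. by rewrite /dag map_mxM trmx_mul. Qed.

Lemma unitary_mulmx_dag n (P : 'M[C]_n) : P \is unitarymx -> P *m dag P = 1%:M.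
Proof. by move/unitarymxP; rewrite dagE. Qed.

Lemma unitary_dag_mulmx n (P : 'M[C]_n) : P \is unitarymx -> dag P *m P = 1%:M.
Proof. by move=> Pu; rewrite dagE -invmx_unitary // mulVmx // unitarymx_unit. Qed.

Lemma mulmx_unitaryK m n (X : 'M[C]_(m, n)) (P : 'M[C]_n) : P \is unitarymx ->
  X *m P *m dag P = X.
Proof. by move=> Pu; rewrite -mulmxA unitary_mulmx_dag // mulmx1. Qed.

Lemma mulmx_dag_unitaryK m n (X : 'M[C]_(m, n)) (P : 'M[C]_n) : P \is unitarymx ->
  X *m dag P *m P = X.
Proof. by move=> Pu; rewrite -mulmxA unitary_dag_mulmx // mulmx1. Qed.

Lemma dag_unitary n (P : 'M[C]_n) : (dag P \is unitarymx) = (P \is unitarymx).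
Proof. by rewrite dagE trmxC_unitary. Qed.

Lemma mxtrace_unitary_conj n (P A : 'M[C]_n) : P \is unitarymx ->
  \tr (dag P *m A *m P) = \tr A.
Proof. by move=> Pu; rewrite mxtrace_mulC mulmxA unitary_mulmx_dag // mul1mx. Qed.

End Dagger.

Section Spectral.
Variable C : numClosedFieldType.

Lemma hermitian_spectral n (A : 'M[C]_n) : dag A = A ->
  exists (P : 'M[C]_n) (d : 'rV[C]_n), P \is unitarymx /\ A = dag P *m diag_mx d *m P.
Proof.
move=> hA; have /orthomx_spectralP eA : A \is normalmx by apply/normalmxP; rewrite -!dagE hA.
exists (spectralmx A), (spectral_diag A); split; first exact: spectral_unitarymx.
by rewrite {1}eA invmx_unitary ?spectral_unitarymx // dagE.
Qed.

Lemma char_poly_unitary_conj n (P B : 'M[C]_n) : P \is unitarymx ->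
  char_poly (dag P *m B *m P) = char_poly B.
Proof.
move=> Pu; rewrite /char_poly /char_poly_mx.
have -> : 'X%:M - map_mx polyC (dag P *m B *m P) =
    map_mx polyC (dag P) *m ('X%:M - map_mx polyC B) *m map_mx polyC P.
  rewrite mulmxBr mulmxBl !map_mxM; congr (_ - _).
  by rewrite scalar_mxC -mulmxA -map_mxM unitary_dag_mulmx // map_mx1 mulmx1.
by rewrite !det_mulmx mulrC mulrA -det_mulmx -map_mxM unitary_mulmx_dag // map_mx1 det1 mul1r.
Qed.

(* Uniqueness of the roots of the characteristic polynomial lets us permute the
   eigenbasis so that the eigenvalues come in the order of [s]. *)
Lemma eigen_desc_spectral n (A : 'M[C]_n) s : dag A = A -> eigen_desc A s ->
  exists2 P : 'M[C]_n, P \is unitarymx & A = dag P *m diag_mx (\row_i s`_i) *m P.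
Proof.
move=> hA [ss [cpA _]]; have [P [d [Pu eA]]] := hermitian_spectral hA.
have : perm_eq s [tuple d 0 i | i < n].
  apply: prod_XsubC_eq; rewrite -cpA eA char_poly_unitary_conj // char_poly_trig ?diag_mx_is_trig //.
  by rewrite big_tuple; apply: eq_bigr => i _; rewrite tnth_mktuple mxE eqxx mulr1n.
case/tuple_permP => p es; exists (row_perm p P).
  apply/unitarymxP; rewrite -dagE; apply/matrixP => i j.
  have := congr1 (fun M : 'M[C]_n => M (p i) (p j)) (unitary_mulmx_dag Pu).
  rewrite !mxE (inj_eq perm_inj) => <-.
  by apply: eq_bigr => k _; rewrite !mxE.
rewrite eA !mul_mx_diag; apply/matrixP => a b; rewrite !mxE (reindex_inj (@perm_inj _ p)).
by apply: eq_bigr => i _; rewrite !mxE es -tnth_nth !tnth_mktuple.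
Qed.

Lemma psd_diag_ge0 n (A P : 'M[C]_n) (d : 'rV[C]_n) : psd A -> P \is unitarymx ->
  A = dag P *m diag_mx d *m P -> forall i, 0 <= d 0 i.
Proof.
move=> [_ psdA] Pu eA i; have := psdA (dag (row i P)).
rewrite dagK eA !mulmxA -row_mul unitary_mulmx_dag // -mulmxA.
rewrite -[P in P *m dag _]dagK -dagM -(row_mul _ P) unitary_mulmx_dag //.
rewrite mul_mx_diag !mxE (bigD1 i) //= big1 ?addr0.
  by rewrite !mxE !eqxx conjC1 mulr1 mul1r.
by move=> k /negbTE ki; rewrite !mxE eq_sym ki !mul0r.
Qed.

Lemma psd_eigen_ge0 n (A : 'M[C]_n) s : psd A -> eigen_desc A s -> forall i, 0 <= s`_i.
Proof.
move=> psdA sA i; case: (ltnP i n) => [lt_in|]; last first.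
  by case: sA => ss _ le_ni; rewrite nth_default ?ss.
have [P Pu eA] := eigen_desc_spectral psdA.1 sA.
by have := psd_diag_ge0 psdA Pu eA (Ordinal lt_in); rewrite mxE.
Qed.

Lemma density_eigen_le1 n (A : 'M[C]_n) s : density A -> eigen_desc A s ->
  forall i, s`_i <= 1.
Proof.
move=> [psdA trA] sA i; have s_ge0 := psd_eigen_ge0 psdA sA.
case: (ltnP i n) => [lt_in|]; last by case: sA => ss _ le_ni; rewrite nth_default ?ss ?ler01.
have [P Pu eA] := eigen_desc_spectral psdA.1 sA.
rewrite -trA eA mxtrace_unitary_conj // mxtrace_diag (bigD1 (Ordinal lt_in)) //= mxE.
by rewrite lerDl sumr_ge0 // => k _; rewrite mxE.
Qed.

End Spectral.

Section TraceBound.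
Variable C : numClosedFieldType.

Lemma unitarymx_row_sqr_sum n (R : 'M[C]_n) i : R \is unitarymx ->
  \sum_j R i j * (R i j)^* = 1.
Proof.
move=> Ru; have := congr1 (fun M : 'M[C]_n => M i i) (unitary_mulmx_dag Ru).
by rewrite !mxE eqxx mulr1n => <-; apply: eq_bigr => j _; rewrite dag_mxE.
Qed.

Lemma unitarymx_col_sqr_sum n (R : 'M[C]_n) j : R \is unitarymx ->
  \sum_i R i j * (R i j)^* = 1.
Proof.
move=> Ru; have := congr1 (fun M : 'M[C]_n => M j j) (unitary_dag_mulmx Ru).
by rewrite !mxE eqxx mulr1n => <-; apply: eq_bigr => i _; rewrite dag_mxE mulrC.
Qed.

Lemma mxtrace_sqr_conj_spectral n (sigma xi U P Q : 'M[C]_n) (d e : 'rV[C]_n) :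
  P \is unitarymx ->
  sigma = dag P *m diag_mx d *m P -> xi = dag Q *m diag_mx e *m Q ->
  let R := Q *m U *m dag P in
  \tr (sigma *m sigma *m dag U *m xi *m U) =
  \sum_i \sum_j R i j * (R i j)^* * (e 0 i * d 0 j ^+ 2).
Proof.
move=> Pu -> -> R.
have -> : dag P *m diag_mx d *m P *m (dag P *m diag_mx d *m P) *m dag U *m
          (dag Q *m diag_mx e *m Q) *m U =
          dag P *m (diag_mx d *m diag_mx d *m dag R *m diag_mx e *m R) *m P.
  by rewrite /R !dagM dagK !mulmxA (mulmx_unitaryK _ Pu) (mulmx_dag_unitaryK _ Pu).
rewrite mxtrace_unitary_conj // mulmx_diag mul_diag_mx mul_mx_diag /mxtrace exchange_big /=.
apply: eq_bigr => j _; rewrite !mxE; apply: eq_bigr => i _; rewrite !mxE.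
ring.
Qed.

(* The weights |R i j|^2 of a unitary R form a doubly stochastic matrix, and
   mu_j^2 <= mu_j because the eigenvalues of a density operator lie in [0, 1]. *)
Lemma mxtrace_sqr_conj_le n (sigma xi U : 'M[C]_n) (lam mu : seq C) :
  density xi -> U \is unitarymx -> density sigma ->
  eigen_desc xi lam -> eigen_desc sigma mu ->
  \tr (sigma *m sigma *m dag U *m xi *m U) <= \sum_(i < n) lam`_i * mu`_i.
Proof.
move=> dxi Uu dsigma lam_xi mu_sigma.
have lam_ge0 := psd_eigen_ge0 dxi.1 lam_xi.
have mu_ge0 := psd_eigen_ge0 dsigma.1 mu_sigma.
have mu_le1 := density_eigen_le1 dsigma mu_sigma.
have [Q Qu eQ] := eigen_desc_spectral dxi.1.1 lam_xi.
have [P Pu eP] := eigen_desc_spectral dsigma.1.1 mu_sigma.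
rewrite (mxtrace_sqr_conj_spectral U Pu eP eQ) /=.
set R := Q *m U *m dag P.
have Ru : R \is unitarymx by rewrite !mul_unitarymx ?dag_unitary.
set W := \matrix_(i, j) (R i j * (R i j)^*).
apply: (@le_trans _ _ (\sum_i \sum_j W i j * (lam`_i * mu`_j))).
  apply: ler_sum => i _; apply: ler_sum => j _; rewrite !mxE.
  apply: ler_wpM2l; first exact: mul_conjC_ge0.
  apply: ler_wpM2l => //; rewrite expr2 -[leRHS]mulr1; exact: ler_wpM2l.
case: lam_xi mu_sigma => size_lam [_ lam_sorted] [size_mu [_ mu_sorted]].
apply: substochastic_rearrangement.
- by move=> k _; exact: sorted_ge0_nth_succ_le.
- by rewrite nth_default ?size_lam.
- by move=> k _; exact: sorted_ge0_nth_succ_le.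
- by rewrite nth_default ?size_mu.
- by move=> i j; rewrite mxE mul_conjC_ge0.
- by move=> i; under eq_bigr do rewrite mxE; rewrite unitarymx_row_sqr_sum.
- by move=> j; under eq_bigr do rewrite mxE; rewrite unitarymx_col_sqr_sum.
Qed.

End TraceBound.

Lemma sum_mxvec_index (V : nmodType) m n (F : 'I_(m * n) -> V) :
  \sum_a F a = \sum_(i < m) \sum_(k < n) F (mxvec_index i k).
Proof.
rewrite (reindex (uncurry (@mxvec_index m n))) /=; last exact: curry_mxvec_bij.
by rewrite pair_big; apply: eq_bigr => -[i k].
Qed.

Section ChannelSuperfidelity.
Variable C : numClosedFieldType.

(* The column vector of [X (x) Z] whose coefficient on [|i>|k>] is [M i k]. *)
Definition cvec m n (M : 'M[C]_(m, n)) : 'cV[C]_(m * n) := (mxvec M)^T.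

Lemma cvecE m n (M : 'M[C]_(m, n)) i k : cvec M (mxvec_index i k) 0 = M i k.
Proof. by rewrite mxE mxvecE. Qed.

Lemma cvecK m n (v : 'cV[C]_(m * n)) : cvec (vec_mx v^T) = v.
Proof. by rewrite /cvec vec_mxK trmxK. Qed.

Lemma idx_splitK m n (i : 'I_m) (k : 'I_n) : idx_split (mxvec_index i k) = (i, k).
Proof. by rewrite /idx_split /mxvec_index cast_ordK enum_rankK. Qed.

Lemma tensor_idE m n (Phi : 'M[C]_m -> 'M[C]_m) (X : 'M[C]_(m * n)) i k j l :
  tensor_id Phi X (mxvec_index i k) (mxvec_index j l) =
  Phi (\matrix_(i', j') X (mxvec_index i' k) (mxvec_index j' l)) i j.
Proof.
rewrite /tensor_id summxE (bigD1 k) //= summxE (bigD1 l) //=.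
rewrite [X in _ + X]big1 ?addr0 => [|k' /negbTE k'k]; last first.
  by rewrite summxE big1 // => l' _; rewrite !mxE !idx_splitK /= eq_sym k'k mulr0.
rewrite big1 ?addr0 => [|l' /negbTE l'l]; last by rewrite !mxE !idx_splitK /= eqxx eq_sym l'l mulr0.
by rewrite !mxE !idx_splitK /= !eqxx mulr1.
Qed.

Lemma outer_mxE N (u v : 'cV[C]_N) a b : (u *m dag v) a b = u a 0 * (v b 0)^*.
Proof. by rewrite !mxE big_ord1 !mxE. Qed.

Lemma quadform_mxE N (w : 'cV[C]_N) (K : 'M[C]_N) :
  (dag w *m K *m w) 0 0 = \sum_a \sum_b (w a 0)^* * K a b * w b 0.
Proof.
rewrite mxE; under eq_bigr do rewrite mxE mulr_suml.
by rewrite exchange_big; apply: eq_bigr => a _; apply: eq_bigr => b _; rewrite dag_mxE.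
Qed.

Lemma dag_cvec_mul m n (M : 'M[C]_(m, n)) :
  dag (cvec M) *m cvec M = (\tr (dag M *m M))%:M.
Proof.
apply/matrixP => r s; rewrite !ord1 mxE sum_mxvec_index /mxtrace exchange_big.
rewrite mxE eqxx mulr1n; apply: eq_bigr => k _; rewrite mxE.
by apply: eq_bigr => i _; rewrite dag_mxE cvecE dag_mxE.
Qed.

Lemma ptraceZ_outer m n (M : 'M[C]_(m, n)) :
  ptraceZ (cvec M *m dag (cvec M)) = M *m dag M.
Proof.
apply/matrixP => i j; rewrite !mxE; apply: eq_bigr => k _.
by rewrite outer_mxE !cvecE dag_mxE.
Qed.

Lemma outer_pure N (v : 'cV[C]_N) : dag v *m v = 1%:M -> pure (v *m dag v).
Proof.
move=> v_unit; split; last by exists v.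
split; last by rewrite mxtrace_mulC v_unit mxtrace1.
split=> [|u]; first by rewrite dagM dagK.
rewrite !mulmxA -(mulmxA (dag u *m v)).
have -> : dag v *m u = dag (dag u *m v) by rewrite dagM dagK.
by rewrite mxE big_ord1 dag_mxE mul_conjC_ge0.
Qed.

Lemma superfid_pure_r N (r : 'M[C]_N) (w : 'cV[C]_N) : dag w *m w = 1%:M ->
  superfid r (w *m dag w) = (dag w *m r *m w) 0 0.
Proof.
move=> w_unit.
have idem : w *m dag w *m (w *m dag w) = w *m dag w.
  by rewrite mulmxA -(mulmxA w) w_unit mulmx1.
have tr1 : \tr (w *m dag w) = 1 by rewrite mxtrace_mulC w_unit mxtrace1.
rewrite /superfid idem tr1 subrr sqrtC0 mulr0 addr0.
by rewrite mulmxA mxtrace_mulC mulmxA /mxtrace big_ord1.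
Qed.

Lemma tensor_id_unitary_outer m n (U : 'M[C]_m) (M : 'M[C]_(m, n)) :
  tensor_id (fun A => U *m A *m dag U) (cvec M *m dag (cvec M)) =
  cvec (U *m M) *m dag (cvec (U *m M)).
Proof.
apply/matrixP => a b; case/mxvec_indexP: a => i k; case/mxvec_indexP: b => j l.
rewrite tensor_idE outer_mxE !cvecE.
have -> : \matrix_(i', j') (cvec M *m dag (cvec M)) (mxvec_index i' k) (mxvec_index j' l) =
          col k M *m dag (col l M).
  by apply/matrixP => i' j'; rewrite outer_mxE mxE outer_mxE !cvecE !mxE.
have mul_colE (c : 'I_n) (r : 'I_m) : (U *m col c M) r 0 = (U *m M) r c.
  by rewrite !mxE; apply: eq_bigr => s _; rewrite !mxE.
by rewrite mulmxA -mulmxA -dagM outer_mxE !mul_colE.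
Qed.

Lemma tensor_id_erasure_outerE m n (xi : 'M[C]_m) (M : 'M[C]_(m, n)) i k j l :
  tensor_id (fun A => \tr A *: xi) (cvec M *m dag (cvec M))
    (mxvec_index i k) (mxvec_index j l) = xi i j * (dag M *m M) l k.
Proof.
rewrite tensor_idE mxE mulrC; congr (_ * _); rewrite mxE; apply: eq_bigr => r _.
by rewrite mxE outer_mxE !cvecE dag_mxE mulrC.
Qed.

Lemma erasure_quadform m n (xi : 'M[C]_m) (M N : 'M[C]_(m, n)) :
  (dag (cvec N) *m tensor_id (fun A => \tr A *: xi) (cvec M *m dag (cvec M)) *m cvec N) 0 0 =
  \tr (dag N *m xi *m N *m (dag M *m M)).
Proof.
rewrite quadform_mxE sum_mxvec_index.
under eq_bigr => i _ do under eq_bigr => k _ do rewrite sum_mxvec_index.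
under eq_bigr => i _ do under eq_bigr => k _ do under eq_bigr => j _ do
  under eq_bigr => l _ do rewrite tensor_id_erasure_outerE !cvecE.
rewrite exchange_big /mxtrace; apply: eq_bigr => k _; rewrite mxE.
under eq_bigr do rewrite exchange_big.
rewrite exchange_big; apply: eq_bigr => l _; rewrite [(_ *m N) k l]mxE mulr_suml.
rewrite exchange_big; apply: eq_bigr => j _; rewrite [(dag N *m xi) k j]mxE !mulr_suml.
by apply: eq_bigr => i _; rewrite dag_mxE; ring.
Qed.

Lemma superfid_erasure_unitary m n (xi U sigma : 'M[C]_m) (rho : 'M[C]_(m * n)) :
  U \is unitarymx -> pure rho -> ptraceZ rho = sigma ->
  superfid (tensor_id (fun A => \tr A *: xi) rho) (tensor_id (fun A => U *m A *m dag U) rho) =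
  \tr (sigma *m sigma *m dag U *m xi *m U).
Proof.
move=> Uu [[_ tr_rho] [v rhoE]] <-; subst rho.
have [M vE] : exists M, v = cvec M by exists (vec_mx v^T); rewrite cvecK.
subst v.
have trM : \tr (dag M *m M) = 1.
  by rewrite -tr_rho [RHS]mxtrace_mulC dag_cvec_mul mxtrace_scalar.
have UM_unit : dag (cvec (U *m M)) *m cvec (U *m M) = 1%:M.
  by rewrite dag_cvec_mul dagM !mulmxA (mulmx_dag_unitaryK _ Uu) trM.
rewrite tensor_id_unitary_outer superfid_pure_r // erasure_quadform ptraceZ_outer.
transitivity (\tr ((dag U *m xi *m U) *m (M *m dag M *m (M *m dag M)))).
  by rewrite dagM -!mulmxA mxtrace_mulC !mulmxA.
by rewrite mxtrace_mulC !mulmxA.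
Qed.

Lemma psd_factor n (A : 'M[C]_n) : psd A -> exists M : 'M[C]_n, A = M *m dag M.
Proof.
move=> psdA; have [P [d [Pu eA]]] := hermitian_spectral psdA.1.
have d_ge0 := psd_diag_ge0 psdA Pu eA.
set D := diag_mx (\row_i sqrtC (d 0 i)).
have dagD : dag D = D.
  apply/matrixP => i j; rewrite dag_mxE !mxE rmorphMn eq_sym.
  by case: eqP => [->|_]; rewrite ?mulr0n // !mulr1n; apply: geC0_conj; rewrite sqrtC_ge0.
exists (dag P *m D); rewrite dagM dagK dagD mulmxA -(mulmxA (dag P)) mulmx_diag eA.
by congr (_ *m diag_mx _ *m _); apply/rowP => i; rewrite !mxE -expr2 sqrtCK.
Qed.

Lemma purification_exists n (sigma : 'M[C]_n) : density sigma ->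
  exists m (rho : 'M[C]_(n * m)), pure rho /\ ptraceZ rho = sigma.
Proof.
move=> [psd_sigma tr_sigma]; have [M eM] := psd_factor psd_sigma.
exists n, (cvec M *m dag (cvec M)); rewrite ptraceZ_outer -eM; split=> //.
by apply: outer_pure; rewrite dag_cvec_mul mxtrace_mulC -eM tr_sigma.
Qed.

Lemma is_inf_singleton (S : C -> Prop) g : S g -> (forall x, S x -> x = g) -> is_inf S g.
Proof. by move=> Sg S_g; split=> [x /S_g ->|b]; [exact: lexx | apply]. Qed.

End ChannelSuperfidelity.

Theorem mainTheorem5 (C : numClosedFieldType) (n : nat)
  (xi U sigma : 'M[C]_n) (lam mu : seq C) :
  density xi -> U \is unitarymx -> density sigma ->
  eigen_desc xi lam -> eigen_desc sigma mu ->
  is_Gch (fun A : 'M[C]_n => \tr A *: xi) (fun A : 'M[C]_n => U *m A *m dag U) sigma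
         (\tr (sigma *m sigma *m dag U *m xi *m U)) /\
  \tr (sigma *m sigma *m dag U *m xi *m U) <= \sum_(i < n) lam`_i * mu`_i.
Proof.
move=> dxi Uu dsigma lam_xi mu_sigma; split; last exact: mxtrace_sqr_conj_le.
have [m [rho [rho_pure rho_sigma]]] := purification_exists dsigma.
apply: is_inf_singleton => [|g [m' [rho' [rho'_pure [rho'_sigma ->]]]]].
  by exists m, rho; rewrite (superfid_erasure_unitary _ Uu rho_pure rho_sigma).
exact: superfid_erasure_unitary.
Qed.
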